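(* For each positive integer $n\ge 4$, there exists a family of $n$ sidigraphs of order $4^n$ which are pairwise cospectral, each having only integer eigenvalues, and each being strongly connected, non symmetric and non cycle balanced.
   Context: A sidigraph is a digraph (no loops, at most one arc from $u$ to $v$) with a sign $\pm1$ on each arc; its adjacency matrix has entry $\sigma(v_i,v_j)$ if there is an arc from $v_i$ to $v_j$ and $0$ otherwise, and its eigenvalues/spectrum are those of this matrix (spectrum as a multiset). Two sidigraphs are cospectral if they have the same spectrum. A sidigraph is strongly connected if its underlying digraph is. It is symmetric if whenever $(u,v)$ is an arc, $(v,u)$ is an arc with the same sign. The sign of a cycle is the product of the signs of its arcs; a sidigraph is cycle balanced if every directed cycle is positive, non cycle balanced otherwise. *)

From HB Require Import structures.
From mathcomp Require Import all_boot all_order all_algebra fingroup perm algC.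
Set Implicit Arguments. Unset Strict Implicit. Unset Printing Implicit Defensive.
Import Order.TTheory GRing.Theory Num.Theory.
Local Open Scope ring_scope.

(* A sidigraph of order N on the vertex set 'I_N is represented by its
   adjacency matrix A : 'M[int]_N: A i j = sign of the arc (i,j) if there is
   an arc from i to j, and 0 otherwise. *)
Definition is_sidigraph (N : nat) (A : 'M[int]_N) : Prop :=
  (forall i j, A i j = 0 \/ A i j = 1 \/ A i j = -1) /\ (forall i, A i i = 0).

Definition arc (N : nat) (A : 'M[int]_N) : rel 'I_N := fun i j => A i j != 0.

Definition adjC (N : nat) (A : 'M[int]_N) : 'M[algC]_N :=
  map_mx (fun x : int => x%:~R) A.

Definition cospectral (N : nat) (A B : 'M[int]_N) : Prop :=
  forall z : algC, mup z (char_poly (adjC A)) = mup z (char_poly (adjC B)).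

Definition integer_eigenvalues (N : nat) (A : 'M[int]_N) : Prop :=
  forall z : algC, eigenvalue (adjC A) z -> z \is a Num.int.

Definition strongly_connected (N : nat) (A : 'M[int]_N) : Prop :=
  forall i j : 'I_N, connect (arc A) i j.

Definition symmetric_sidigraph (N : nat) (A : 'M[int]_N) : Prop :=
  forall i j : 'I_N, A i j != 0 -> A j i = A i j.

Definition directed_cycle (N : nat) (A : 'M[int]_N) (c : seq 'I_N) : bool :=
  [&& c != [::], uniq c & path.cycle (arc A) c].

Definition cycle_sign (N : nat) (A : 'M[int]_N) (c : seq 'I_N) : int :=
  \prod_(p <- zip c (rot 1 c)) A p.1 p.2.

Definition cycle_balanced (N : nat) (A : 'M[int]_N) : Prop :=
  forall c, directed_cycle A c -> cycle_sign A c = 1.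

Definition sidigraph_iso (N : nat) (A B : 'M[int]_N) : Prop :=
  exists s : 'S_N, forall i j, B (s i) (s j) = A i j.

From Pilot Require Import Defs.
From HB Require Import structures.
From mathcomp Require Import all_boot all_order all_algebra fingroup perm algC.
From mathcomp Require Import zify.
Set Implicit Arguments. Unset Strict Implicit. Unset Printing Implicit Defensive.
Import Order.TTheory GRing.Theory Num.Theory.
Local Open Scope ring_scope.

(* Each member of the family is the bipartite double [[0, X], [X, 0]] of a
   rank-one matrix X = u v^T with entries +-1 and v^T u = 0.  It squares to
   zero, so its characteristic polynomial is X^N: all members are cospectral
   with spectrum {0}.  Every arc between the two halves is present, giving
   strong connectivity, and a pair of opposite arcs of different signs is a
   negative 2-cycle, which rules out both symmetry and cycle balance.  With
   u = (a, 1), v = (a, -1) and a having exactly k entries -1, the sum of all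
   entries is -8k(q-k), an isomorphism invariant separating the members. *)

Lemma char_poly_sqr0 (F : closedFieldType) n (M : 'M[F]_n) :
  M *m M = 0 -> char_poly M = 'X^n.
Proof.
move=> M2.
have root0 z : root (char_poly M) z -> z = 0.
  rewrite -eigenvalue_root_char => /eigenvalueP [v vM v_nz].
  have : v *m M *m M = z ^+ 2 *: v by rewrite vM -scalemxAl vM scalerA expr2.
  rewrite -mulmxA M2 mulmx0 => /esym/eqP.
  by rewrite scaler_eq0 (negbTE v_nz) orbF expf_eq0 => /andP[_ /eqP].
have [r defM] := closed_field_poly_normal (char_poly M).
rewrite (monicP (char_poly_monic M)) scale1r in defM.
have size_r : size r = n.
  by have := size_char_poly M; rewrite defM size_prod_XsubC => -[].
have /all_pred1P r0 : all (pred1 0) r.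
  by apply/allP => z zr; apply/eqP/root0; rewrite defM root_prod_XsubC.
by rewrite defM r0 big_nseq subr0 iter_mulr_1 size_r.
Qed.

Lemma char_poly_adjC_sqr0 N (A : 'M[int]_N) :
  A *m A = 0 -> char_poly (adjC A) = 'X^N.
Proof. by move=> A2; apply: char_poly_sqr0; rewrite /adjC -map_mxM A2 map_mx0. Qed.

Lemma sqr0_cospectral N (A B : 'M[int]_N) :
  A *m A = 0 -> B *m B = 0 -> cospectral A B.
Proof. by move=> A2 B2 z; rewrite !char_poly_adjC_sqr0. Qed.

Lemma sqr0_integer_eigenvalues N (A : 'M[int]_N) :
  A *m A = 0 -> integer_eigenvalues A.
Proof.
move=> A2 z; rewrite eigenvalue_root_char char_poly_adjC_sqr0 // rootE hornerXn.
by rewrite expf_eq0 => /andP[_ /eqP->]; apply: rpred0.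
Qed.

Lemma negative_digon_not_symmetric N (A : 'M[int]_N) i j :
  A i j * A j i = -1 -> ~ symmetric_sidigraph A.
Proof.
move=> Aij symA; have Aij_nz : A i j != 0 by apply: contra_eqN Aij => /eqP->; rewrite mul0r.
by move: Aij; rewrite (symA i j Aij_nz); nia.
Qed.

Lemma negative_digon_not_cycle_balanced N (A : 'M[int]_N) i j :
  i != j -> A i j * A j i = -1 -> ~ cycle_balanced A.
Proof.
move=> ij Aij balA.
have cyc : directed_cycle A [:: i; j].
  by rewrite /directed_cycle /= inE ij /Defs.arc /= andbT -negb_or -mulf_eq0 Aij.
by move: (balA _ cyc); rewrite /cycle_sign /= !big_cons big_nil mulr1 Aij.
Qed.

Definition entry_sum m n (A : 'M[int]_(m, n)) : int := \sum_i \sum_j A i j.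

Lemma entry_sum_iso N (A B : 'M[int]_N) : sidigraph_iso A B -> entry_sum B = entry_sum A.
Proof.
case=> s sAB; rewrite /entry_sum (reindex_inj (@perm_inj _ s)).
by apply: eq_bigr => i _; rewrite (reindex_inj (@perm_inj _ s)); apply: eq_bigr.
Qed.

Lemma entry_sum_mul_col_row m n (u : 'cV[int]_m) (v : 'rV[int]_n) :
  entry_sum (u *m v) = entry_sum u * entry_sum v.
Proof.
rewrite /entry_sum big_ord1 mulr_suml; apply: eq_bigr => i _.
rewrite big_ord1 mulr_sumr; apply: eq_bigr => j _.
by rewrite mxE big_ord1.
Qed.

Lemma entry_sum_col_mx m1 m2 n (A : 'M[int]_(m1, n)) (B : 'M[int]_(m2, n)) :
  entry_sum (col_mx A B) = entry_sum A + entry_sum B.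
Proof.
rewrite /entry_sum big_split_ord /=.
by congr (_ + _); apply: eq_bigr => i _; apply: eq_bigr => j _; rewrite (col_mxEu, col_mxEd).
Qed.

Lemma entry_sum_row_mx m n1 n2 (A : 'M[int]_(m, n1)) (B : 'M[int]_(m, n2)) :
  entry_sum (row_mx A B) = entry_sum A + entry_sum B.
Proof.
rewrite /entry_sum -big_split /=; apply: eq_bigr => i _.
by rewrite big_split_ord /=; congr (_ + _); apply: eq_bigr => j _; rewrite (row_mxEl, row_mxEr).
Qed.

Lemma entry_sum_tr m n (A : 'M[int]_(m, n)) : entry_sum A^T = entry_sum A.
Proof.
by rewrite /entry_sum exchange_big; apply: eq_bigr => i _; apply: eq_bigr => j _; rewrite mxE.
Qed.

Lemma entry_sum_const m n (a : int) : entry_sum (const_mx a : 'M_(m, n)) = a *+ (m * n).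
Proof.
rewrite /entry_sum (eq_bigr (fun => a *+ n)) => [|i _]; last first.
  by rewrite (eq_bigr (fun => a)) => [|j _]; rewrite ?sumr_const ?card_ord // /const_mx mxE.
by rewrite sumr_const card_ord -mulrnA mulnC.
Qed.

Lemma mul_col_row_sign m n (u : 'cV[int]_m) (v : 'rV[int]_n) :
  (forall i, u i 0 ^+ 2 = 1) -> (forall j, v 0 j ^+ 2 = 1) ->
  forall i j, (u *m v) i j ^+ 2 = 1.
Proof. by move=> u_sign v_sign i j; rewrite mxE big_ord1 exprMn u_sign v_sign mulr1. Qed.

Definition bipartite_mx m (X : 'M[int]_m) : 'M[int]_(m + m) := block_mx 0 X X 0.

Lemma entry_sum_bipartite_mx m (X : 'M[int]_m) :
  entry_sum (bipartite_mx X) = entry_sum X *+ 2.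
Proof.
rewrite /entry_sum /bipartite_mx big_split_ord /= mulr2n.
congr (_ + _); apply: eq_bigr => i _; rewrite big_split_ord /=.
  rewrite big1 ?add0r => [|j _]; last by rewrite block_mxEul mxE.
  by apply: eq_bigr => j _; rewrite block_mxEur.
rewrite [X in _ + X]big1 ?addr0 => [|j _]; last by rewrite block_mxEdr mxE.
by apply: eq_bigr => j _; rewrite block_mxEdl.
Qed.

Lemma bipartite_mx_sqr0 m (X : 'M[int]_m) :
  X *m X = 0 -> bipartite_mx X *m bipartite_mx X = 0.
Proof.
by move=> X2; rewrite /bipartite_mx mulmx_block !mul0mx !mulmx0 X2 ?addr0 ?add0r block_mx0.
Qed.

Section SignedBipartite.

Variables (m : nat) (X : 'M[int]_m).
Hypothesis X_sign : forall i j, X i j ^+ 2 = 1.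

Lemma bipartite_mx_sidigraph : is_sidigraph (bipartite_mx X).
Proof.
rewrite /bipartite_mx; split=> [i j|i].
  case: (split_ordP i) => {}i ->; case: (split_ordP j) => {}j ->;
    rewrite ?block_mxEul ?block_mxEur ?block_mxEdl ?block_mxEdr ?mxE; auto;
    by have /eqP := X_sign i j; rewrite sqrf_eq1 => /orP[/eqP|/eqP]; auto.
by case: (split_ordP i) => {}i ->; rewrite ?block_mxEul ?block_mxEdr mxE.
Qed.

Lemma bipartite_mx_strongly_connected : (0 < m)%N -> strongly_connected (bipartite_mx X).
Proof.
move=> m_gt0; pose i0 := Ordinal m_gt0.
have X_nz i j : X i j != 0 by apply: contra_eq_neq (X_sign i j) => ->; rewrite expr0n.
have arc_lr i j : connect (Defs.arc (bipartite_mx X)) (lshift m i) (rshift m j).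
  by apply: connect1; rewrite /Defs.arc /bipartite_mx block_mxEur.
have arc_rl i j : connect (Defs.arc (bipartite_mx X)) (rshift m i) (lshift m j).
  by apply: connect1; rewrite /Defs.arc /bipartite_mx block_mxEdl.
move=> i j; case: (split_ordP i) => {}i ->; case: (split_ordP j) => {}j ->; auto.
- exact: connect_trans (arc_lr i i0) (arc_rl i0 j).
- exact: connect_trans (arc_rl i i0) (arc_lr i0 j).
Qed.

End SignedBipartite.

Definition sign_col q k : 'cV[int]_q := \col_i (-1) ^+ (i < k)%N.

Definition pattern_col q k : 'cV[int]_(q + q) := col_mx (sign_col q k) (const_mx 1).

Definition pattern_row q k : 'rV[int]_(q + q) := row_mx (sign_col q k)^T (const_mx (-1)).

Definition family_mx q k : 'M[int]_((q + q) + (q + q)) :=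
  bipartite_mx (pattern_col q k *m pattern_row q k).

Lemma entry_sum_sign_col q k : (k <= q)%N -> entry_sum (sign_col q k) = q%:R - 2 * k%:R.
Proof.
move=> kq; rewrite /entry_sum; under eq_bigr => i _ do rewrite big_ord1 mxE.
rewrite -(big_mkord xpredT (fun i => (-1) ^+ (i < k)%N)).
rewrite (@big_cat_nat _ _ _ k 0 q _ _ (leq0n k) kq) /=.
rewrite (eq_big_nat _ _ (F2 := fun => -1)) => [|i /andP[_ ->]] //.
rewrite [X in _ + X](eq_big_nat _ _ (F2 := fun => 1)) => [|i /andP[ki _]].
  by rewrite !sumr_const_nat subn0 mulNrn natrB //; lia.
by rewrite ltnNge ki.
Qed.

Lemma pattern_row_col q k : pattern_row q k *m pattern_col q k = 0.
Proof.
apply/matrixP => i j; rewrite !ord1 mul_row_col !mxE.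
rewrite (eq_bigr (fun => 1)) => [|l _]; last by rewrite !mxE -expr2 sqrr_sign.
rewrite [X in _ + X](eq_bigr (fun => -1)) => [|l _]; last by rewrite /const_mx !mxE mulr1.
by rewrite !sumr_const card_ord mulNrn subrr.
Qed.

Lemma pattern_col_sign q k i : pattern_col q k i 0 ^+ 2 = 1.
Proof.
case: (split_ordP i) => {}i ->; rewrite (col_mxEu, col_mxEd) /const_mx mxE ?expr1n //.
exact: sqrr_sign.
Qed.

Lemma pattern_row_sign q k j : pattern_row q k 0 j ^+ 2 = 1.
Proof.
case: (split_ordP j) => {}j ->; rewrite (row_mxEl, row_mxEr) /const_mx !mxE ?sqrrN ?expr1n //.
exact: sqrr_sign.
Qed.

Lemma pattern_mx_sign q k i j : (pattern_col q k *m pattern_row q k) i j ^+ 2 = 1.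
Proof. by apply: mul_col_row_sign; [apply: pattern_col_sign | apply: pattern_row_sign]. Qed.

Lemma entry_sum_family_mx q k : (k <= q)%N ->
  entry_sum (family_mx q k) = - 8 * k%:Z * (q%:Z - k%:Z).
Proof.
move=> kq; rewrite /family_mx entry_sum_bipartite_mx entry_sum_mul_col_row.
rewrite entry_sum_col_mx entry_sum_row_mx entry_sum_tr !entry_sum_const entry_sum_sign_col //.
by rewrite muln1 mul1n mulNrn !natz; lia.
Qed.

Lemma family_mx_noniso q k l : (k + l < q)%N -> k != l ->
  ~ sidigraph_iso (family_mx q k) (family_mx q l).
Proof.
move=> klq /eqP kl /entry_sum_iso; rewrite !entry_sum_family_mx; [|lia|lia].
by move=> eq_sum; apply: kl; nia.
Qed.

Lemma family_mx_sqr0 q k : family_mx q k *m family_mx q k = 0.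
Proof.
apply: bipartite_mx_sqr0.
by rewrite mulmxA -(mulmxA (pattern_col q k)) pattern_row_col mulmx0 mul0mx.
Qed.

Lemma family_mx_negative_digon q k : (0 < q)%N ->
  exists i j, i != j /\ family_mx q k i j * family_mx q k j i = -1.
Proof.
move=> q_gt0; pose i0 := Ordinal q_gt0.
pose i := lshift q i0; pose j := rshift q i0.
exists (lshift _ i), (rshift _ j); split; first by rewrite eq_shift.
rewrite /family_mx /bipartite_mx block_mxEur block_mxEdl !mxE !big_ord1.
rewrite /i /j col_mxEu col_mxEd row_mxEl row_mxEr /const_mx !mxE.
by rewrite mul1r mulrAC -expr2 sqrr_sign mul1r.
Qed.

Theorem theorem2p11 (n : nat) : (4 <= n)%N ->
  exists F : 'I_n -> 'M[int]_(4 ^ n),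
    (forall k, is_sidigraph (F k)) /\
    (forall k l, k != l -> ~ sidigraph_iso (F k) (F l)) /\
    (forall k l, cospectral (F k) (F l)) /\
    (forall k, integer_eigenvalues (F k) /\ strongly_connected (F k) /\
               ~ symmetric_sidigraph (F k) /\ ~ cycle_balanced (F k)).
Proof.
case: n => [//|n] _; set q := (4 ^ n)%N.
have q_gt0 : (0 < q)%N by rewrite expn_gt0.
have kl_lt_q (k l : 'I_n.+1) : (k + l < q)%N.
  have := ltn_expl (2 * n) (isT : (1 < 2)%N); rewrite expnM.
  by have := ltn_ord k; have := ltn_ord l; rewrite -/q; lia.
have -> : (4 ^ n.+1 = (q + q) + (q + q))%N by rewrite expnS; lia.
exists (fun k => family_mx q k); split.
  by move=> k; apply/bipartite_mx_sidigraph/pattern_mx_sign.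
split; first by move=> k l kl; apply: family_mx_noniso.
split; first by move=> k l; apply: sqr0_cospectral; apply: family_mx_sqr0.
move=> k; have [i [j [ij digon]]] := family_mx_negative_digon k q_gt0.
split; first exact/sqr0_integer_eigenvalues/family_mx_sqr0.
split; last by split; [apply: negative_digon_not_symmetric digon
                      | apply: negative_digon_not_cycle_balanced ij digon].
by apply/bipartite_mx_strongly_connected; [apply: pattern_mx_sign | rewrite addn_gt0 q_gt0].
Qed.
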